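(* Let $f:\mathbb{R}\to\mathbb{R}$ satisfy $f(0)=0$ and $|f(u)-f(v)|\leq C|u-v|(e^{\lambda u^2}+e^{\lambda v^2})$ for all $u,v\in\mathbb{R}$, for some constants $C,\lambda>0$. Let $T>0$ and $u\in C([0,T];\exp L^2_0(\mathbb{R}^N))$. Then for every $2\leq p<\infty$, $f(u)\in C([0,T];L^p(\mathbb{R}^N))$.
   Context: The Orlicz space $\exp L^2(\mathbb{R}^N)$ is the set of $u\in L^1_{loc}(\mathbb{R}^N)$ such that $\int_{\mathbb{R}^N}(e^{|u(x)|^2/\alpha^2}-1)\,dx<\infty$ for some $\alpha>0$, with the Luxemburg norm $\|u\|_{\exp L^2}=\inf\{\alpha>0:\int_{\mathbb{R}^N}(e^{|u(x)|^2/\alpha^2}-1)\,dx\leq 1\}$. $\exp L^2_0(\mathbb{R}^N)$ is the closure of $C_0^\infty(\mathbb{R}^N)$ in this norm, equivalently the set of $u\in L^1_{loc}$ with $\int(e^{|u|^2/\alpha^2}-1)\,dx<\infty$ for every $\alpha>0$, equipped with the same norm. *)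

From HB Require Import structures.
From mathcomp Require Import all_boot all_order all_algebra.
From mathcomp Require Import all_classical all_reals all_analysis.
Set Implicit Arguments. Unset Strict Implicit. Unset Printing Implicit Defensive.
Import Order.TTheory GRing.Theory Num.Theory.
Import numFieldNormedType.Exports.
Local Open Scope classical_set_scope.
Local Open Scope ring_scope.

(* R^N is represented by N.-tuple R, with the library's product (Borel)
   sigma-algebra on tuples.  The Lebesgue integral over R^N of a
   nonnegative (extended-real valued) function is the iterated Lebesgue
   integral over R (equal to the integral w.r.t. N-dimensional Lebesgue
   measure for nonnegative measurable functions, by Tonelli). *)
Fixpoint iint (R : realType) (N : nat) : (N.-tuple R -> \bar R) -> \bar R :=
  match N with
  | 0 => fun g => g [tuple]
  | n.+1 => fun g =>
      (\int[@lebesgue_measure R]_(x in [set: R]) iint (fun t : n.-tuple R => g (cons_tuple x t)))%E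
  end.

Definition exp_integral (R : realType) (N : nat) (g : N.-tuple R -> R) (a : R) : \bar R :=
  iint (fun x => (expR (g x ^+ 2 / a ^+ 2) - 1)%:E).

Definition in_expL2_0 (R : realType) (N : nat) (g : N.-tuple R -> R) : Prop :=
  measurable_fun [set: N.-tuple R] g /\
  forall a : R, 0 < a -> (exp_integral g a < +oo)%E.

Definition expL2_norm (R : realType) (N : nat) (g : N.-tuple R -> R) : R :=
  inf [set a : R | 0 < a /\ (exp_integral g a <= 1)%E].

Definition Lp_integral (R : realType) (N : nat) (g : N.-tuple R -> R) (p : R) : \bar R :=
  iint (fun x => (`|g x| `^ p)%:E).

Definition in_Lp (R : realType) (N : nat) (g : N.-tuple R -> R) (p : R) : Prop :=
  measurable_fun [set: N.-tuple R] g /\ (Lp_integral g p < +oo)%E.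

Definition Lp_norm (R : realType) (N : nat) (g : N.-tuple R -> R) (p : R) : \bar R :=
  ((Lp_integral g p) `^ p^-1)%E.

From HB Require Import structures.
From mathcomp Require Import all_boot all_order all_algebra.
From mathcomp Require Import all_classical all_reals all_analysis.
From mathcomp Require Import measurable_realfun.
From mathcomp Require Import ring lra.
Import Order.TTheory GRing.Theory Num.Theory.
Import numFieldNormedType.Exports.
Local Open Scope classical_set_scope.
Local Open Scope ring_scope.

(* Write psi_a(z) = e^(z^2/a^2) - 1 ([expL2_integrand a z]), so that [exp_integral g a]
   is the integral of psi_a(g).  With b^-2 = 8 p lambda, the growth condition on f, the bounds |z|^q <= K_q psi_1(z)
   for q >= 2 and Young's inequality Z E <= Z^2 + E^2 give, for 0 < a <= b and reals x y,
     |f x - f y|^p <= M a^p (psi_a(x - y) + psi_b(y)).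
   Integrate with x = u(s), y = u(t): the psi_a term has integral at most 1 as soon as
   ||u(s) - u(t)||_(exp L^2) < a, and the psi_b term has finite integral because u(t) is
   in exp L^2_0, so ||f(u(s)) - f(u(t))||_p^p = O(a^p).  Taking y = 0 gives f(u(t)) in L^p. *)

Section iterated_integral.
Context {R : realType}.
Local Open Scope ereal_scope.

Lemma iint_ge0 n (g : n.-tuple R -> \bar R) : (forall t, 0 <= g t) -> 0 <= iint g.
Proof.
elim: n g => [|n IH] g g0 /=; first exact: g0.
by apply: integral_ge0 => x _; apply: IH.
Qed.

Lemma iint0 n : iint (fun _ : n.-tuple R => 0) = 0.
Proof. by elim: n => [|n IH] //=; under eq_integral do rewrite IH; exact: integral0. Qed.

Lemma measurable_cons_section n (g : (n.+1).-tuple R -> \bar R) (x : R) :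
  measurable_fun setT g -> measurable_fun setT (fun t : n.-tuple R => g (cons_tuple x t)).
Proof.
move=> mg; apply: measurableT_comp mg _.
exact: (@measurable_cons _ _ _ (measurableTypeR R) (fun=> x) n idfun
  (measurable_cst _) (@measurable_id _ _ _)).
Qed.

Lemma measurable_iint_section n d (X : measurableType d) (G : X * n.-tuple R -> \bar R) :
  measurable_fun setT G -> (forall z, 0 <= G z) ->
  measurable_fun setT (fun x => iint (fun t => G (x, t))).
Proof.
elim: n d X G => [|n IH] d X G mG G0 /=.
  by apply: measurableT_comp mG _; exact: measurable_fun_pair.
pose H := fun z : (X * R) * n.-tuple R => G (z.1.1, cons_tuple z.1.2 z.2).
have mH : measurable_fun setT H.
  apply: measurableT_comp mG (measurable_fun_pair _ _); first exact: measurableT_comp.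
  exact: measurable_cons (measurableT_comp measurable_snd measurable_fst) measurable_snd.
exact (@measurable_fun_fubini_tonelli_F _ _ X (measurableTypeR R) R lebesgue_measure
  (fun xy => iint (fun s => H (xy, s))) (IH _ _ H mH (fun=> G0 _))
  (fun=> iint_ge0 _ _ (fun=> G0 _))).
Qed.

Lemma measurable_iint_cons n (g : (n.+1).-tuple R -> \bar R) :
  measurable_fun setT g -> (forall t, 0 <= g t) ->
  measurable_fun [set: R] (fun x => iint (fun t => g (cons_tuple x t))).
Proof.
move=> mg g0.
have mG : measurable_fun setT
    (fun z : (measurableTypeR R * n.-tuple R)%type => g (cons_tuple z.1 z.2)).
  exact: measurableT_comp mg (measurable_cons measurable_fst measurable_snd).
exact (measurable_iint_section _ _ _ _ mG (fun=> g0 _)).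
Qed.

Lemma le_iint n (g1 g2 : n.-tuple R -> \bar R) :
  measurable_fun setT g1 -> measurable_fun setT g2 ->
  (forall t, 0 <= g1 t) -> (forall t, g1 t <= g2 t) -> iint g1 <= iint g2.
Proof.
elim: n g1 g2 => [|n IH] g1 g2 m1 m2 g10 g12 /=; first exact: g12.
have g20 t : 0 <= g2 t by exact: le_trans (g10 t) (g12 t).
apply: ge0_le_integral => //.
- by move=> x _; apply: iint_ge0.
- exact: measurable_iint_cons.
- exact: measurable_iint_cons.
- by move=> x _; apply: IH => //; exact: measurable_cons_section.
Qed.

Lemma iintD n (g1 g2 : n.-tuple R -> \bar R) :
  measurable_fun setT g1 -> measurable_fun setT g2 ->
  (forall t, 0 <= g1 t) -> (forall t, 0 <= g2 t) ->
  iint (fun t => g1 t + g2 t) = iint g1 + iint g2.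
Proof.
elim: n g1 g2 => [|n IH] g1 g2 m1 m2 g10 g20 //=.
rewrite -ge0_integralD //.
- by apply: eq_integral => x _; apply: IH => //; exact: measurable_cons_section.
- by move=> x _; apply: iint_ge0.
- exact: measurable_iint_cons.
- by move=> x _; apply: iint_ge0.
- exact: measurable_iint_cons.
Qed.

Lemma iintZ n (k : \bar R) (g : n.-tuple R -> \bar R) :
  0 <= k -> measurable_fun setT g -> (forall t, 0 <= g t) ->
  iint (fun t => k * g t) = k * iint g.
Proof.
elim: n g => [|n IH] g k0 mg g0 //=.
rewrite -ge0_integralZl //.
- by apply: eq_integral => x _; apply: IH => //; exact: measurable_cons_section.
- exact: measurable_iint_cons.
- by move=> x _; apply: iint_ge0.
Qed.

Lemma le_iint_scaleD n (g g1 g2 : n.-tuple R -> \bar R) (k : R) : (0 <= k)%R ->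
  measurable_fun setT g -> measurable_fun setT g1 -> measurable_fun setT g2 ->
  (forall t, 0 <= g t) -> (forall t, 0 <= g1 t) -> (forall t, 0 <= g2 t) ->
  (forall t, g t <= k%:E * (g1 t + g2 t)) -> iint g <= k%:E * (iint g1 + iint g2).
Proof.
move=> k0 mg m1 m2 g0 g10 g20 gk.
rewrite -iintD // -iintZ ?lee_fin //; last by move=> t; exact: adde_ge0.
  apply: le_iint => //; apply: emeasurable_funM => //; exact: emeasurable_funD.
exact: emeasurable_funD.
Qed.

End iterated_integral.

Section real_inequalities.
Context {R : realType}.

Lemma expR_sub1_ge0 (t : R) : 0 <= t -> 0 <= expR t - 1.
Proof. by move=> t0; rewrite subr_ge0 -expR0 ler_expR. Qed.

Lemma expR_midpoint_le (A B : R) : expR ((A + B) / 2) <= (expR A + expR B) / 2.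
Proof.
have sqrK (x : R) : expR x = expR (x / 2) ^+ 2.
  by rewrite -expRM_natl; congr expR; field.
rewrite [in X in _ <= X]sqrK [in X in _ <= X](sqrK B) mulrDl expRD ler_pdivlMr //.
have := sqr_ge0 (expR (A / 2) - expR (B / 2)); nra.
Qed.

Lemma natrM_expR_sub1_le (n : nat) (t : R) : 0 <= t ->
  n%:R * (expR t - 1) <= expR (n%:R * t) - 1.
Proof.
move=> t0; elim: n => [|n IH]; first by rewrite !mul0r expR0 subrr.
rewrite -natr1 !mulrDl !mul1r expRD.
have et : 1 <= expR t by rewrite -expR0 ler_expR.
have ent : 1 <= expR (n%:R * t) by rewrite -expR0 ler_expR mulr_ge0.
nra.
Qed.

Lemma powR_le_expR_sqr_sub1 (q : R) : 2 <= q ->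
  exists2 K : R, 0 < K & forall x : R, `|x| `^ q <= K * (expR (x ^+ 2) - 1).
Proof.
move=> q2; set k := (Num.Def.truncn q).+1.
have qk : q <= k.*2%:R.
  by have := truncnS_gt q; rewrite -/k -addnn natrD; have := ler0n R k; lra.
exists k`!%:R; first by rewrite ltr0n fact_gt0.
move=> x; have e0 := expR_sub1_ge0 _ (sqr_ge0 x).
have [x1|x1] := lerP `|x| 1.
  have [->|x0] := eqVneq x 0.
    by rewrite normr0 powR0 ?mulr_ge0 // gt_eqF // (lt_le_trans _ q2).
  have xq : `|x| `^ q <= x ^+ 2.
    rewrite -real_normK ?num_real // -powR_mulrn //.
    by apply: ger_powR => //; rewrite normr_gt0 x0.
  have := expR_ge1Dx (x ^+ 2); have : 1 <= k`!%:R :> R by rewrite ler1n fact_gt0.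
  nra.
apply: (le_trans (y := `|x| `^ k.*2%:R)); first by apply: ler_powR => //; exact: ltW.
rewrite powR_mulrn // -addnn exprD -exprMn -normrM -expr2 ger0_norm ?sqr_ge0 //.
have := expR_ge1Dxn (Num.Def.truncn q) (sqr_ge0 x); rewrite -/k.
have kf : (0 : R) < k`!%:R by rewrite ltr0n fact_gt0.
move=> h; have : x ^+ 2 ^+ k / k`!%:R <= expR (x ^+ 2) - 1 by lra.
by rewrite ler_pdivrMr // mulrC.
Qed.

Lemma powR_add3_le (u v r p : R) : 0 <= u -> 0 <= v -> 0 <= r -> 0 <= p ->
  (u + v + r) `^ p <= 3 `^ p * (u `^ p + v `^ p + r `^ p).
Proof.
move=> u0 v0 r0 p0; set m := Num.max u (Num.max v r).
have um : u <= m by rewrite le_max lexx.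
have vm : v <= m by rewrite !le_max lexx orbT.
have rm : r <= m by rewrite !le_max lexx !orbT.
apply: (le_trans (y := (3 * m) `^ p)).
  by apply: ge0_ler_powR; rewrite // ?nnegrE; lra.
have m0 : 0 <= m := le_trans u0 um.
rewrite powRM //; apply: ler_wpM2l; first exact: powR_ge0.
have := powR_ge0 u p; have := powR_ge0 v p; have := powR_ge0 r p.
rewrite /m /Num.max; case: ifP => _; last lra.
by case: ifP => _; lra.
Qed.

Lemma sqr_powR_expR_sub1_le (t p : R) : 0 <= t -> 1 <= p ->
  ((expR t - 1) `^ p) ^+ 2 <= 2 * (expR (2 * p * t) - 1).
Proof.
move=> t0 p1; have E0 := expR_sub1_ge0 _ t0.
have et : expR t <= expR (2 * p * t) by rewrite ler_expR; nra.
have P0 := powR_ge0 (expR t - 1) p.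
have [E1|E1] := lerP (expR t - 1) 1.
  have EpE : (expR t - 1) `^ p <= expR t - 1.
    have [->|E_neq0] := eqVneq (expR t - 1) 0.
      by rewrite powR0 // gt_eqF // (lt_le_trans _ p1).
    by apply: ge1r_powR; rewrite // E1 andbT lt_neqAle eq_sym E_neq0.
  have : ((expR t - 1) `^ p) ^+ 2 <= (expR t - 1) `^ p by rewrite expr2 ler_piMl //; lra.
  lra.
have Ep : (expR t - 1) `^ p <= expR t `^ p by apply: ge0_ler_powR; rewrite ?nnegrE; lra.
have : ((expR t - 1) `^ p) ^+ 2 <= expR (2 * p * t).
  have -> : expR (2 * p * t) = (expR t `^ p) ^+ 2.
    by rewrite -expRM -expRM_natl; congr expR; ring.
  by rewrite !expr2; apply: ler_pM.
lra.
Qed.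

End real_inequalities.

Section expL2_integrand.
Context {R : realType}.
Implicit Types a b x y z : R.

Definition expL2_integrand a z : R := expR (z ^+ 2 / a ^+ 2) - 1.

Lemma expL2_integrand_ge0 a z : 0 <= expL2_integrand a z.
Proof. by apply: expR_sub1_ge0; rewrite divr_ge0 ?sqr_ge0. Qed.

Lemma expL2_integrand0 a : expL2_integrand a 0 = 0.
Proof. by rewrite /expL2_integrand expr0n /= mul0r expR0 subrr. Qed.

Lemma expL2_integrand_le_scale a b z : 0 < a -> a <= b ->
  expL2_integrand b z <= expL2_integrand a z.
Proof.
move=> a0 ab; have b0 := lt_le_trans a0 ab.
rewrite lerD2r ler_expR ler_wpM2l ?sqr_ge0 // lef_pV2 ?posrE ?exprn_gt0 //.
by rewrite ler_pXn2r // nnegrE ltW.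
Qed.

Lemma expL2_integrandB_le a x y : 0 < a ->
  expL2_integrand a (x - y) <=
  2^-1 * (expL2_integrand (a / 2) x + expL2_integrand (a / 2) y).
Proof.
move=> a0; rewrite /expL2_integrand.
have c0 : 0 < (a ^+ 2)^-1 by rewrite invr_gt0 exprn_gt0.
have half z : z ^+ 2 / (a / 2) ^+ 2 = 4 * z ^+ 2 / a ^+ 2.
  by field; rewrite gt_eqF.
have : (x - y) ^+ 2 / a ^+ 2 <= (x ^+ 2 / (a / 2) ^+ 2 + y ^+ 2 / (a / 2) ^+ 2) / 2.
  rewrite !half; have := mulr_ge0 (sqr_ge0 (x + y)) (ltW c0); lra.
rewrite -ler_expR => /le_trans/(_ (expR_midpoint_le _ _)); lra.
Qed.

Lemma expL2_integrand_sqrt_scale a z (n : nat) : 0 < a -> (0 < n)%N ->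
  expL2_integrand (a * Num.sqrt n%:R) z <= n%:R^-1 * expL2_integrand a z.
Proof.
move=> a0 n0; have n0' : (0 : R) < n%:R by rewrite ltr0n.
rewrite /expL2_integrand exprMn sqr_sqrtr ?ler0n //.
set t := z ^+ 2 / (a ^+ 2 * n%:R).
have -> : z ^+ 2 / a ^+ 2 = n%:R * t by rewrite /t; field; rewrite !gt_eqF.
rewrite -(ler_pM2l n0') mulrA mulfV ?gt_eqF // mul1r.
by apply: natrM_expR_sub1_le; rewrite /t divr_ge0 ?sqr_ge0 // mulr_ge0 ?sqr_ge0 // ltW.
Qed.

Lemma sqr_powR_expR_sub1_le_expL2_integrand {lam p a b : R} x y :
  0 < lam -> 1 <= p -> 0 < a -> a <= b -> (b ^+ 2)^-1 = 8 * p * lam ->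
  ((expR (lam * x ^+ 2) - 1) `^ p) ^+ 2 <=
  expL2_integrand b y + expL2_integrand a (x - y).
Proof.
move=> l0 p1 a0 ab hb.
have t0 : 0 <= lam * x ^+ 2 by rewrite mulr_ge0 ?sqr_ge0 // ltW.
apply: le_trans (sqr_powR_expR_sub1_le _ _ t0 p1) _.
apply: (le_trans (y := expL2_integrand b y + expL2_integrand b (x - y))); last first.
  by rewrite lerD2l expL2_integrand_le_scale.
rewrite /expL2_integrand.
have : 2 * p * (lam * x ^+ 2) <= (y ^+ 2 / b ^+ 2 + (x - y) ^+ 2 / b ^+ 2) / 2.
  rewrite !hb; have pl : 0 <= p * lam by rewrite mulr_ge0 // ?ltW //; lra.
  have := mulr_ge0 pl (sqr_ge0 (x - 2 * y)); lra.
rewrite -ler_expR => /le_trans/(_ (expR_midpoint_le _ _)); lra.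
Qed.

End expL2_integrand.

Section pointwise_estimate.
Context {R : realType}.
Context {f : R -> R} {C lam : R}.
Hypothesis growth_f : forall x y : R,
  `|f x - f y| <= C * `|x - y| * (expR (lam * x ^+ 2) + expR (lam * y ^+ 2)).
Hypotheses (C_gt0 : 0 < C) (lam_gt0 : 0 < lam).

Lemma growth_continuous : continuous f.
Proof.
move=> x; apply/cvgrPdist_lt => e e0.
set L := C * (expR (lam * (`|x| + 1) ^+ 2) + expR (lam * x ^+ 2)) + 1.
have L0 : 0 < L by rewrite ltr_pwDr // mulr_ge0 ?addr_ge0 ?expR_ge0 // ltW.
apply/nbhs_ballP; exists (Num.min 1 (e / L)); first by rewrite /= lt_min ltr01 divr_gt0.
move=> y; rewrite /ball /= lt_min => /andP[xy1 xyL].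
have yx : `|y| <= `|x| + 1.
  by rewrite -[y](subKr x) (le_trans (ler_normB _ _)) // lerD2l ltW.
have ey : expR (lam * y ^+ 2) <= expR (lam * (`|x| + 1) ^+ 2).
  rewrite ler_expR; apply: ler_wpM2l; first exact: ltW.
  by rewrite -real_normK ?num_real // ler_pXn2r ?nnegrE ?addr_ge0.
have Cw0 : 0 <= C * `|x - y| by rewrite mulr_ge0 // ltW.
have := ler_wpM2l Cw0 ey; have := growth_f x y.
have : `|x - y| * L < e by rewrite -ltr_pdivlMr.
have := normr_ge0 (x - y); rewrite /L; lra.
Qed.

Lemma powR_growth_le p x y : 0 <= p ->
  `|f x - f y| `^ p <= (3 * C) `^ p * `|x - y| `^ p *
    ((expR (lam * x ^+ 2) - 1) `^ p + (expR (lam * y ^+ 2) - 1) `^ p + 2 `^ p).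
Proof.
move=> p0; set Ex := expR (lam * x ^+ 2) - 1; set Ey := expR (lam * y ^+ 2) - 1.
have Ex0 : 0 <= Ex by apply: expR_sub1_ge0; rewrite mulr_ge0 ?sqr_ge0 // ltW.
have Ey0 : 0 <= Ey by apply: expR_sub1_ge0; rewrite mulr_ge0 ?sqr_ge0 // ltW.
have S0 : 0 <= Ex + Ey + 2 by lra.
have C0 := ltW C_gt0.
have Cw0 : 0 <= C * `|x - y| by rewrite mulr_ge0.
apply: (le_trans (y := (C * `|x - y| * (Ex + Ey + 2)) `^ p)).
  apply: ge0_ler_powR; rewrite // ?nnegrE ?mulr_ge0 //.
  have -> : Ex + Ey + 2 = expR (lam * x ^+ 2) + expR (lam * y ^+ 2) by rewrite /Ex /Ey; ring.
  exact: growth_f.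
set T := Ex `^ p + Ey `^ p + 2 `^ p.
have -> : (3 * C) `^ p * `|x - y| `^ p * T = C `^ p * (`|x - y| `^ p * (3 `^ p * T)).
  by rewrite powRM //; ring.
rewrite !powRM // -mulrA; apply: ler_wpM2l; first exact: powR_ge0.
apply: ler_wpM2l; first exact: powR_ge0.
exact: powR_add3_le.
Qed.

Lemma powR_growth_le_expL2_integrand p : 2 <= p ->
  exists2 b : R, 0 < b & exists2 M : R, 0 <= M & forall a x y, 0 < a -> a <= b ->
    `|f x - f y| `^ p <= M * a `^ p * (expL2_integrand a (x - y) + expL2_integrand b y).
Proof.
move=> p2; have p1 : 1 <= p by lra.
have p4 : 2 <= p * 2 by lra.
have [K1 K10 hK1] := powR_le_expR_sqr_sub1 _ p2.
have [K2 K20 hK2] := powR_le_expR_sqr_sub1 _ p4.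
have lp0 : 0 < 8 * p * lam by rewrite !mulr_gt0 //; lra.
pose b := Num.sqrt (8 * p * lam)^-1.
have b0 : 0 < b by rewrite sqrtr_gt0 invr_gt0.
have hb : (b ^+ 2)^-1 = 8 * p * lam by rewrite sqr_sqrtr ?invrK // invr_ge0 ltW.
pose K := 2 * K2 + 2 `^ p * K1 + 2.
have PK1 : 0 <= 2 `^ p * K1 by rewrite mulr_ge0 ?powR_ge0 // ltW.
exists b => //; exists ((3 * C) `^ p * K); first by rewrite mulr_ge0 ?powR_ge0 // /K; lra.
move=> a x y a0 ab.
set Ex := expR (lam * x ^+ 2) - 1; set Ey := expR (lam * y ^+ 2) - 1.
set Z := `|(x - y) / a| `^ p.
set pa := expL2_integrand a (x - y); set pb := expL2_integrand b y.
have hZ : `|x - y| `^ p = a `^ p * Z.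
  rewrite /Z -powRM ?(ltW a0) //; congr (_ `^ _).
  by rewrite normrM normfV (gtr0_norm a0) mulrCA divff ?mulr1 // gt_eqF.
have hZ1 : Z <= K1 * pa by have := hK1 ((x - y) / a); rewrite expr_div_n.
have hZ2 : Z ^+ 2 <= K2 * pa.
  by have := hK2 ((x - y) / a); rewrite expr_div_n powRrM powR_mulrn ?powR_ge0.
have hEx : (Ex `^ p) ^+ 2 <= pb + pa by exact: sqr_powR_expR_sub1_le_expL2_integrand.
have hEy : (Ey `^ p) ^+ 2 <= pb.
  have := sqr_powR_expR_sub1_le_expL2_integrand y y lam_gt0 p1 a0 ab hb.
  by rewrite subrr expL2_integrand0 addr0.
have bracket : Z * (Ex `^ p + Ey `^ p + 2 `^ p) <= K * (pa + pb).
  have := expL2_integrand_ge0 a (x - y); have := expL2_integrand_ge0 b y.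
  rewrite -/pa -/pb => pb0 pa0.
  have := ler_wpM2l (powR_ge0 2 p) hZ1.
  have := mulr_ge0 (ltW K20) pb0; have := mulr_ge0 PK1 pb0.
  have := sqr_ge0 (Z - Ex `^ p); have := sqr_ge0 (Z - Ey `^ p).
  rewrite /K; nra.
have p0 : 0 <= p by lra.
apply: le_trans (powR_growth_le p x y p0) _.
rewrite -/Ex -/Ey hZ; set S := _ + _ + _.
have -> : (3 * C) `^ p * (a `^ p * Z) * S = (3 * C) `^ p * a `^ p * (Z * S) by ring.
have -> : (3 * C) `^ p * K * a `^ p * (pa + pb) = (3 * C) `^ p * a `^ p * (K * (pa + pb)).
  by ring.
by rewrite ler_wpM2l // mulr_ge0 ?powR_ge0.
Qed.

End pointwise_estimate.

Section exp_integral.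
Context {R : realType} {N : nat}.
Implicit Types (g : N.-tuple R -> R) (a : R).
Local Open Scope ereal_scope.

Lemma measurable_expL2_integrand g a : measurable_fun setT g ->
  measurable_fun setT (fun x => (expL2_integrand a (g x))%:E).
Proof.
move=> mg; apply/measurable_EFinP; apply: measurable_funB => //.
apply: measurableT_comp; first exact: measurable_expR.
by apply: measurable_funM => //; exact: measurable_funX.
Qed.

Lemma exp_integral_ge0 g a : 0 <= exp_integral g a.
Proof. by apply: iint_ge0 => x; rewrite lee_fin; exact: expL2_integrand_ge0. Qed.

Lemma exp_integral0 a : exp_integral (fun _ : N.-tuple R => 0%R) a = 0.
Proof.
rewrite -(iint0 N); congr iint; apply/funext => x.
by rewrite /= expr0n /= mul0r expR0 subrr.
Qed.

Lemma exp_integral_le_scale g a b : measurable_fun setT g -> (0 < a)%R -> (a <= b)%R ->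
  exp_integral g b <= exp_integral g a.
Proof.
move=> mg a0 ab; apply: le_iint; try exact: measurable_expL2_integrand.
  by move=> x; rewrite lee_fin; exact: expL2_integrand_ge0.
by move=> x; rewrite lee_fin; exact: expL2_integrand_le_scale.
Qed.

Lemma exp_integralB_le g1 g2 a : measurable_fun setT g1 -> measurable_fun setT g2 ->
  (0 < a)%R ->
  exp_integral (fun x => g1 x - g2 x)%R a <=
  (2^-1)%:E * (exp_integral g1 (a / 2) + exp_integral g2 (a / 2)).
Proof.
move=> m1 m2 a0; apply: le_iint_scaleD; rewrite ?invr_ge0 //.
- exact: measurable_expL2_integrand (measurable_funB m1 m2).
- exact: measurable_expL2_integrand.
- exact: measurable_expL2_integrand.
- by move=> x; rewrite lee_fin; exact: expL2_integrand_ge0.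
- by move=> x; rewrite lee_fin; exact: expL2_integrand_ge0.
- by move=> x; rewrite lee_fin; exact: expL2_integrand_ge0.
- by move=> x; rewrite -EFinD -EFinM lee_fin; exact: expL2_integrandB_le.
Qed.

Lemma in_expL2_0B g1 g2 :
  in_expL2_0 g1 -> in_expL2_0 g2 -> in_expL2_0 (fun x => g1 x - g2 x)%R.
Proof.
move=> [m1 h1] [m2 h2]; split=> [|a a0]; first exact: measurable_funB.
have a20 : (0 < a / 2)%R by rewrite divr_gt0.
apply: le_lt_trans (exp_integralB_le _ _ _ m1 m2 a0) _.
rewrite lte_mul_pinfty ?lee_fin ?invr_ge0 //.
exact: lte_add_pinfty (h1 _ a20) (h2 _ a20).
Qed.

Lemma exp_integral_sqrt_scale g a (n : nat) : measurable_fun setT g -> (0 < a)%R ->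
  (0 < n)%N -> exp_integral g (a * Num.sqrt n%:R) <= (n%:R^-1)%:E * exp_integral g a.
Proof.
move=> mg a0 n0; have mF (b : R) := measurable_expL2_integrand _ b mg.
have F0 (b : R) x : 0 <= (expL2_integrand b (g x))%:E by rewrite lee_fin expL2_integrand_ge0.
rewrite /exp_integral -iintZ ?lee_fin ?invr_ge0 //; [|exact: mF|exact: F0].
apply: le_iint; [exact: mF| |exact: F0|].
  by apply: emeasurable_funM => //; exact: mF.
by move=> x; rewrite -EFinM lee_fin; exact: expL2_integrand_sqrt_scale.
Qed.

Lemma exists_exp_integral_le1 g : in_expL2_0 g -> exists2 a, (0 < a)%R & exp_integral g a <= 1.
Proof.
move=> [mg Fg]; have := Fg 1%R ltr01.
rewrite -ge0_fin_numE ?exp_integral_ge0 // => /fineK E1.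
set r := fine (exp_integral g 1) in E1.
pose n := (Num.Def.truncn r).+1.
have n0 : (0 < n%:R :> R)%R by rewrite ltr0n.
exists (1 * Num.sqrt n%:R)%R; first by rewrite mul1r sqrtr_gt0.
apply: le_trans (exp_integral_sqrt_scale _ _ _ mg ltr01 (ltn0Sn _)) _.
by rewrite -E1 -EFinM lee_fin ler_pdivrMl // mulr1 ltW // truncnS_gt.
Qed.

Lemma exp_integral_le1_of_norm_lt g a : in_expL2_0 g -> (expL2_norm g < a)%R ->
  exp_integral g a <= 1.
Proof.
(* [inf set0 = 0], so the Luxemburg set must first be shown nonempty. *)
move=> gL ga; have [a1 a10 Ea1] := exists_exp_integral_le1 _ gL.
have [b [b0 Eb] ba] := inf_lt (ex_intro _ a1 (conj a10 Ea1)) ga.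
exact: le_trans (exp_integral_le_scale _ _ _ gL.1 b0 (ltW ba)) Eb.
Qed.

End exp_integral.

Section Lp_integral.
Context {R : realType} {N : nat}.
Implicit Types (g : N.-tuple R -> R).
Local Open Scope ereal_scope.

Lemma Lp_integral_ge0 g p : 0 <= Lp_integral g p.
Proof. by apply: iint_ge0 => x; rewrite lee_fin powR_ge0. Qed.

Lemma Lp_norm_lt g (p e : R) : (0 < p)%R -> (0 < e)%R ->
  Lp_integral g p < (e `^ p)%:E -> Lp_norm g p < e%:E.
Proof.
move=> p0 e0 Ie; have /fineK EI : Lp_integral g p \is a fin_num.
  by rewrite ge0_fin_numE ?Lp_integral_ge0 // (lt_trans Ie) ?ltry.
have I0 : (0 <= fine (Lp_integral g p))%R by rewrite -lee_fin EI Lp_integral_ge0.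
have Ie' : (fine (Lp_integral g p) < e `^ p)%R by rewrite -lte_fin EI.
have eK : ((e `^ p) `^ p^-1 = e)%R by rewrite -powRrM mulfV ?gt_eqF // powRr1 // ltW.
rewrite /Lp_norm -EI poweR_EFin lte_fin -[X in (_ < X)%R]eK.
by apply: gt0_ltr_powR; rewrite ?invr_gt0 ?nnegrE ?powR_ge0.
Qed.

End Lp_integral.

Section superposition.
Context {R : realType} {N : nat}.
Context {f : R -> R} {C lam p : R}.
Hypothesis growth_f : forall x y : R,
  `|f x - f y| <= C * `|x - y| * (expR (lam * x ^+ 2) + expR (lam * y ^+ 2)).
Hypotheses (C_gt0 : 0 < C) (lam_gt0 : 0 < lam) (p_ge2 : 2 <= p).
Implicit Types (g : N.-tuple R -> R).
Local Open Scope ereal_scope.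

Let p_gt0 : (0 < p)%R. Proof. by rewrite (lt_le_trans _ p_ge2). Qed.
Let p_ge1 : (1 <= p)%R. Proof. by rewrite (le_trans _ p_ge2) // ler1n. Qed.

Let measurable_f : measurable_fun setT f.
Proof. exact: continuous_measurable_fun (growth_continuous growth_f C_gt0 lam_gt0). Qed.

Lemma Lp_integral_comp_sub_le :
  exists2 b : R, (0 < b)%R & exists2 M : R, (0 <= M)%R &
    forall a g1 g2, (0 < a)%R -> (a <= b)%R ->
    measurable_fun setT g1 -> measurable_fun setT g2 ->
    Lp_integral (fun x => f (g1 x) - f (g2 x))%R p <=
    (M * a `^ p)%:E * (exp_integral (fun x => g1 x - g2 x)%R a + exp_integral g2 b).
Proof.
have [b b0 [M M0 hfb]] := powR_growth_le_expL2_integrand growth_f C_gt0 lam_gt0 _ p_ge2.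
exists b => //; exists M => // a g1 g2 a0 ab m1 m2.
have F0 (c : R) z : 0 <= (expL2_integrand c z)%:E by rewrite lee_fin expL2_integrand_ge0.
apply: le_iint_scaleD => //.
- by rewrite mulr_ge0 ?powR_ge0.
- apply/measurable_EFinP; apply: measurableT_comp (measurable_powR p) _.
  apply: measurableT_comp (@normr_measurable R setT) _.
  by apply: measurable_funB; exact: measurableT_comp.
- exact: measurable_expL2_integrand (measurable_funB m1 m2).
- exact: measurable_expL2_integrand.
- by move=> x; exact: F0.
- by move=> x; exact: F0.
- by move=> x; rewrite -EFinD -EFinM lee_fin; exact: hfb.
Qed.

Lemma in_Lp_comp g : (f 0 = 0)%R -> in_expL2_0 g -> in_Lp (fun x => f (g x)) p.
Proof.
move=> f0 [mg Fg]; split; first exact: measurableT_comp measurable_f mg.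
have [b b0 [M M0 hLp]] := Lp_integral_comp_sub_le.
have := hLp b g (fun=> 0%R) b0 (lexx b) mg (measurable_cst _).
rewrite exp_integral0 adde0.
have -> : (fun x => f (g x) - f 0)%R = (fun x => f (g x)).
  by apply/funext => x; rewrite f0 subr0.
have -> : (fun x => g x - 0)%R = g by apply/funext => x; rewrite subr0.
move/le_lt_trans; apply.
by rewrite lte_mul_pinfty ?lee_fin ?mulr_ge0 ?powR_ge0 ?Fg.
Qed.

Lemma Lp_norm_comp_sub_lt g2 (e : R) : in_expL2_0 g2 -> (0 < e)%R ->
  exists2 a : R, (0 < a)%R & forall g1, in_expL2_0 g1 ->
    (expL2_norm (fun x => g1 x - g2 x) < a)%R ->
    Lp_norm (fun x => f (g1 x) - f (g2 x))%R p < e%:E.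
Proof.
move=> g2L e0; have [b b0 [M M0 hLp]] := Lp_integral_comp_sub_le.
have /fineK EB : exp_integral g2 b \is a fin_num.
  by rewrite ge0_fin_numE ?exp_integral_ge0 ?g2L.2.
set B := fine (exp_integral g2 b) in EB.
have B0 : (0 <= B)%R by rewrite -lee_fin EB exp_integral_ge0.
set Q := (M * (1 + B))%R; have Q0 : (0 <= Q)%R by rewrite mulr_ge0 // addr_ge0.
have ep0 : (0 < e `^ p)%R by rewrite powR_gt0.
pose a := Num.min b (Num.min 1 (e `^ p / (Q + 1)))%R.
have Q1 : (0 < Q + 1)%R by lra.
have a0 : (0 < a)%R by rewrite !lt_min b0 ltr01 divr_gt0.
have [ab a1 aQ] : [/\ a <= b, a <= 1 & a <= e `^ p / (Q + 1)]%R.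
  by split; rewrite !ge_min lexx ?orbT.
exists a => // g1 g1L norm_lt.
apply: Lp_norm_lt p_gt0 e0 _.
have E1 := exp_integral_le1_of_norm_lt _ _ (in_expL2_0B _ _ g1L g2L) norm_lt.
apply: le_lt_trans (hLp a g1 g2 a0 ab g1L.1 g2L.1) _.
apply: (@le_lt_trans _ _ ((M * a `^ p)%R%:E * (1 + B%:E))).
  by rewrite lee_wpmul2l ?lee_fin ?mulr_ge0 ?powR_ge0 // -EB leeD2r.
rewrite -EFinD -EFinM lte_fin -mulrA (mulrC (a `^ p)%R) mulrA -/Q.
have apa : (a `^ p <= a)%R by rewrite ge1r_powR ?a0 ?a1 ?p_ge1.
have : (Q * a <= Q * (e `^ p / (Q + 1)))%R by rewrite ler_wpM2l.
have : (Q * (e `^ p / (Q + 1)) < e `^ p)%R.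
  by rewrite mulrCA gtr_pMr // ltr_pdivrMr // mul1r ltrDl.
have := ler_wpM2l Q0 apa; lra.
Qed.

End superposition.

Theorem proposition2p6 (R : realType) (N : nat) (f : R -> R) (C lambda : R)
  (T : R) (u : R -> N.-tuple R -> R) :
  f 0 = 0 ->
  0 < C -> 0 < lambda ->
  (forall a b : R,
     `|f a - f b| <= C * `|a - b| * (expR (lambda * a ^+ 2) + expR (lambda * b ^+ 2))) ->
  0 < T ->
  (* u in C([0,T]; exp L^2_0(R^N)) *)
  (forall t, 0 <= t <= T -> in_expL2_0 (u t)) ->
  (forall t, 0 <= t <= T -> forall e : R, 0 < e -> exists2 d : R, 0 < d &
     forall s, 0 <= s <= T -> `|s - t| < d ->
       expL2_norm (fun x => u s x - u t x) < e) ->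
  (* f(u) in C([0,T]; L^p(R^N)) for every 2 <= p < oo *)
  forall p : R, 2 <= p ->
    (forall t, 0 <= t <= T -> in_Lp (fun x => f (u t x)) p) /\
    (forall t, 0 <= t <= T -> forall e : R, 0 < e -> exists2 d : R, 0 < d &
       forall s, 0 <= s <= T -> `|s - t| < d ->
         (Lp_norm (fun x => (f (u s x) - f (u t x))%R) p < e%:E)%E).
Proof.
move=> f0 C0 lam0 growth_f _ u_expL2 u_cont p p2; split=> [t ht | t ht e e0].
  exact: in_Lp_comp growth_f C0 lam0 p2 _ f0 (u_expL2 t ht).
have [a a0 Lp_lt] := Lp_norm_comp_sub_lt growth_f C0 lam0 p2 _ _ (u_expL2 t ht) e0.
have [d d0 hd] := u_cont t ht a a0.
by exists d => // s hs hsd; apply: Lp_lt (u_expL2 s hs) (hd s hs hsd).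
Qed.
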